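(* Let $\Omega$ be a topological signature and $A$ a Stone topological $\Omega$-algebra. Then $A$ is profinite if and only if, for every clopen subset $L$ of $A$, the syntactic congruence $\sigma_L^A$ is a clopen subset of $A\times A$.
   Context: A topological $\Omega$-algebra is a topological space $A$ with continuous evaluation maps $E_n^A:\Omega_n\times A^n\to A$, where $\Omega=\biguplus_n\Omega_n$ is a signature of topological spaces. A Stone topological algebra is one whose underlying space is compact (Hausdorff) and 0-dimensional. $A$ is profinite if it is compact and for any two distinct elements there is a continuous homomorphism into a finite discrete $\Omega$-algebra separating them. For $L\subseteq A$, the syntactic congruence $\sigma_L^A$ is the largest congruence on $A$ saturating $L$ (i.e., such that $L$ is a union of its classes); equivalently, $(a,a')\in\sigma_L^A$ iff for every translation $f$ of $A$, $f(a)\in L\iff f(a')\in L$, where a translation is a map $a\mapsto t_A(a_1,\dots,a_{i-1},a,a_{i+1},\dots,a_m)$ given by a term $t$ in which the variable $x_i$ occurs exactly once and fixed $a_j\in A$. *)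

From HB Require Import structures.
From mathcomp Require Import all_boot all_order all_algebra.
From mathcomp Require Import all_classical all_reals all_analysis.
Set Implicit Arguments. Unset Strict Implicit. Unset Printing Implicit Defensive.
Local Open Scope classical_set_scope.

(* A topological signature: Omega n is the topological space of n-ary
   operation symbols.  A^n carries the product topology {ptws 'I_n -> A}. *)
Definition signature := nat -> topologicalType.

Definition top_algebra (Omega : signature) (A : topologicalType)
  (E : forall n : nat, Omega n * {ptws 'I_n -> A} -> A) : Prop :=
  forall n, continuous (E n).

Definition zero_dim (T : topologicalType) : Prop :=
  forall (U : set T) (x : T), open U -> U x ->
    exists V : set T, [/\ clopen V, V x & V `<=` U].

Definition stone_space (T : topologicalType) : Prop :=
  [/\ compact [set: T], hausdorff_space T & zero_dim T].

Definition is_hom (Omega : signature) (A B : topologicalType)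
  (EA : forall n : nat, Omega n * {ptws 'I_n -> A} -> A)
  (EB : forall n : nat, Omega n * {ptws 'I_n -> B} -> B) (h : A -> B) : Prop :=
  forall n (w : Omega n) (a : 'I_n -> A),
    h (EA n (w, a)) = EB n (w, (fun i => h (a i)) : {ptws 'I_n -> B}).

Definition profinite (Omega : signature) (A : topologicalType)
  (EA : forall n : nat, Omega n * {ptws 'I_n -> A} -> A) : Prop :=
  compact [set: A] /\
  forall x y : A, x <> y ->
    exists (B : finType)
      (EB : forall n : nat, Omega n * {ptws 'I_n -> discrete_topology B} ->
                            discrete_topology B),
      top_algebra EB /\
      exists h : A -> discrete_topology B,
        [/\ continuous h, is_hom EA EB h & h x <> h y].

Definition is_congruence (Omega : signature) (A : topologicalType)
  (EA : forall n : nat, Omega n * {ptws 'I_n -> A} -> A)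
  (theta : A -> A -> Prop) : Prop :=
  [/\ (forall a, theta a a),
      (forall a b, theta a b -> theta b a),
      (forall a b c, theta a b -> theta b c -> theta a c) &
      (forall n (w : Omega n) (a b : 'I_n -> A),
          (forall i, theta (a i) (b i)) ->
          theta (EA n (w, a)) (EA n (w, b)))].

Definition saturates (A : Type) (theta : A -> A -> Prop) (L : set A) : Prop :=
  forall a b, theta a b -> L a -> L b.

Definition syntactic_congruence (Omega : signature) (A : topologicalType)
  (EA : forall n : nat, Omega n * {ptws 'I_n -> A} -> A) (L : set A)
  (a a' : A) : Prop :=
  exists theta, [/\ is_congruence EA theta, saturates theta L & theta a a'].

From HB Require Import structures.
From mathcomp Require Import all_boot all_order all_algebra.
From mathcomp Require Import all_classical all_reals all_analysis.
From mathcomp Require Import finmap.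
From Stdlib Require Import Relations.
Local Open Scope classical_set_scope.

(* Call a congruence open when its classes are open.  On a compact algebra an
   open congruence has finitely many classes, and a choice of representatives
   turns the quotient into a finite discrete algebra with a continuous
   quotient homomorphism; conversely the kernel of a continuous homomorphism
   into a finite discrete algebra is open.

   If A is profinite and L is clopen, each pair of L x (A \ L) is separated by
   an open congruence, and compactness of L x (A \ L) yields finitely many
   whose intersection is an open congruence saturating L.  The syntactic
   congruence contains it, so it and its complement are unions of products
   of classes of that congruence, hence open.  Conversely, in a Stone space
   two points are separated by a clopen V, and the quotient by the open
   congruence sigma_V separates them.

   That sigma_L is itself a congruence is not immediate from its definition
   as a union: it equals its equivalence closure, which is compatible with
   the operations because their arguments can be changed one at a time. *)

Lemma rel_coordinatewise {n : nat} {T U : Type} (F : ('I_n -> T) -> U)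
    (r : T -> T -> Prop) (s : U -> U -> Prop) :
  (forall u, s u u) -> (forall u v w, s u v -> s v w -> s u w) ->
  (forall a i x y, r x y -> s (F (dfwith a i x)) (F (dfwith a i y))) ->
  forall a b, (forall i, r (a i) (b i)) -> s (F a) (F b).
Proof.
move=> s_refl s_trans s_step a b rab.
pose mix k (i : 'I_n) := if (i < k)%N then b i else a i.
have mixS k (kn : (k < n)%N) : s (F (mix k)) (F (mix k.+1)).
  pose i0 := Ordinal kn.
  have -> : mix k = dfwith (mix k) i0 (a i0).
    apply: funext => j; case: (eqVneq i0 j) => [<-|ne]; last by rewrite dfwithout.
    by rewrite dfwithin /mix ltnn.
  have -> : mix k.+1 = dfwith (mix k) i0 (b i0).
    apply: funext => j; case: (eqVneq i0 j) => [<-|ne].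
      by rewrite dfwithin /mix ltnSn.
    have /negbTE jk : nat_of_ord j != k by rewrite eq_sym; exact: ne.
    by rewrite dfwithout // /mix ltnS leq_eqVlt jk.
  exact: s_step.
have mix_walk k : (k <= n)%N -> s (F a) (F (mix k)).
  elim: k => [_|k IH kn].
    by have -> : mix 0 = a by apply: funext.
  exact: s_trans (IH (ltnW kn)) (mixS k kn).
have -> : b = mix n by apply: funext => i; rewrite /mix ltn_ord.
exact: mix_walk.
Qed.

Section SyntacticCongruence.
Context {Omega : signature} {A : topologicalType}
  {EA : forall n : nat, Omega n * {ptws 'I_n -> A} -> A} {L : set A}.
Local Notation sg := (syntactic_congruence EA L).
Local Notation R := (clos_refl_sym_trans A sg).

Lemma syntactic_congruence_max {th : A -> A -> Prop} :
  is_congruence EA th -> saturates th L -> forall a b, th a b -> sg a b.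
Proof. by move=> thC thL a b ab; exists th. Qed.

Lemma syntactic_congruence_mem a b : sg a b -> L a <-> L b.
Proof. by case=> th [[_ thS _ _] thL ab]; split; apply: thL; last apply: thS. Qed.

Lemma rst_syntactic_dfwith n (w : Omega n) (a : 'I_n -> A) i x y : R x y ->
  R (EA n (w, dfwith a i x)) (EA n (w, dfwith a i y)).
Proof.
have [Rrefl Rtrans Rsym] := clos_rst_is_equiv A sg.
elim=> [{}x {}y [th [thC thL xy]]|//|u v _|u v z _ uv _ vz].
- have [thr _ _ thc] := thC.
  apply: rst_step; exists th; split => //; apply: thc => j.
  by case: (eqVneq i j) => [<-|ne]; rewrite ?dfwithin ?dfwithout.
- exact: Rsym.
- exact: Rtrans uv vz.
Qed.

Lemma rst_syntactic_congruence : is_congruence EA R.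
Proof.
have [Rrefl Rtrans Rsym] := clos_rst_is_equiv A sg.
split=> // n w; apply: (rel_coordinatewise (fun a => EA n (w, a))) => //.
exact: rst_syntactic_dfwith.
Qed.

Lemma rst_syntactic_saturates : saturates R L.
Proof.
move=> a b ab; suff [] : L a <-> L b by [].
elim: ab => [? ? /syntactic_congruence_mem //|//|? ? _ ?|? ? ? _ ? _ ?]; tauto.
Qed.

Lemma syntactic_congruenceE : sg = R.
Proof.
apply/funext => a; apply/funext => b; apply/propext; split; first exact: rst_step.
exact: syntactic_congruence_max rst_syntactic_congruence rst_syntactic_saturates a b.
Qed.

Lemma syntactic_congruence_is_congruence : is_congruence EA sg.
Proof. by rewrite {1}syntactic_congruenceE; exact: rst_syntactic_congruence. Qed.

End SyntacticCongruence.

(* [compact_cover] is only available for pointed spaces, hence this copy of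
   [T] pointed at [x]. *)
Definition pointed_at {T : topologicalType} (x : T) : Type := T.
HB.instance Definition _ (T : topologicalType) (x : T) :=
  Topological.copy (pointed_at x) T.
HB.instance Definition _ (T : topologicalType) (x : T) :=
  isPointed.Build (pointed_at x) x.

Lemma compact_cover_compact {T : topologicalType} {S : set T} :
  compact S -> cover_compact S.
Proof.
case: (pselect (exists x, S x)) => [[x _]|S0].
  by move=> cS; move: (cS : @compact (pointed_at x) S); rewrite compact_cover.
move=> _ I D f _ _; exists fset0 => // p Sp.
by case: S0; exists p.
Qed.

Lemma continuous_discreteP (T : topologicalType) (D : choiceType)
    (h : T -> discrete_topology D) :
  continuous h <-> forall u, nbhs u (h @^-1` [set h u]).
Proof.
split=> hc u.
  have : h @ nbhs u --> h u := hc u.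
  by move/discrete_cvg.
suff : h @ nbhs u --> h u by [].
apply/(@discrete_cvg (discrete_topology D) (h @ nbhs u)); exact: hc.
Qed.

Lemma nbhs_set1_continuous (T U : topologicalType) (g : T -> U) :
  (forall x : T, nbhs x [set x]) -> continuous g.
Proof. by move=> T1 x; apply: cvg_near_cst; apply: filterS (T1 x) => y ->. Qed.

Lemma continuous_map_snd (X Y Z : topologicalType) (g : Y -> Z) :
  continuous g -> continuous (fun p : X * Y => (p.1, g p.2)).
Proof.
move=> gc p; apply: cvg_pair; first exact: cvg_fst.
by apply: cvg_comp (gc _); exact: cvg_app cvg_snd.
Qed.

Lemma ptws_discrete_nbhs_set1 (I : finType) (D : choiceType)
    (f : {ptws I -> discrete_topology D}) : nbhs f [set f].
Proof.
have fF : Filter (nbhs f) := nbhs_filter f.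
have : \forall g \near f, forall i, g i = f i.
  apply: (@filter_forall _ I (fun i g => g i = f i) _ fF) => i.
  exact: (@proj_continuous I (fun=> discrete_topology D) i f _ (discrete_set1 (f i))).
by apply: filterS => g gf; apply: funext.
Qed.

Lemma nbhs_class_of_open {T : topologicalType} {R : T -> T -> Prop} :
  open [set p : T * T | R p.1 p.2] -> forall u, R u u -> nbhs u (R u).
Proof.
rewrite openE => Ro u Ruu; have [[P Q] [Pu Qu] PQ] := Ro (u, u) Ruu.
by apply: filterS Qu => v Qv; apply: (PQ (u, v)); split=> //; exact: nbhs_singleton Pu.
Qed.

Lemma clopen_of_coarser {T : topologicalType} {th R : T -> T -> Prop} :
  (forall u, nbhs u (th u)) -> (forall u v, th u v -> R u v) ->
  symmetric T R -> transitive T R -> clopen [set p : T * T | R p.1 p.2].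
Proof.
move=> th_nbhs thR Rsym Rtrans.
have box (S : T -> T -> Prop) :
    (forall u v u' v', th u u' -> th v v' -> S u v -> S u' v') ->
    open [set p : T * T | S p.1 p.2].
  move=> Sth; rewrite openE => -[u v] /= Suv.
  apply: (@filter_pair_set _ _ _ _ _ _ (th u) (th v)); last by split.
  by move=> u' v' uu' vv'; exact: Sth uu' vv' Suv.
split.
  apply: box => u v u' v' /thR uu' /thR vv' uv.
  exact: Rtrans _ _ _ (Rsym _ _ uu') (Rtrans _ _ _ uv vv').
rewrite -[X in closed X]setCK closedC.
apply: (box (fun u v => ~ R u v)) => u v u' v' /thR uu' /thR vv'.
by apply: contra_not => uv'; exact: Rtrans _ _ _ uu' (Rtrans _ _ _ uv' (Rsym _ _ vv')).
Qed.

Definition open_congruence {Omega : signature} {A : topologicalType}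
    (EA : forall n : nat, Omega n * {ptws 'I_n -> A} -> A)
    (th : A -> A -> Prop) : Prop :=
  is_congruence EA th /\ forall u, nbhs u (th u).

Lemma finite_classes {T : topologicalType} {th : T -> T -> Prop} :
  compact [set: T] -> (forall u, nbhs u (th u)) ->
  exists s : seq T, forall a, exists2 r, r \in s & th r a.
Proof.
move=> cT th_nbhs.
have [D _ cov] : finite_subset_cover [set: T] (interior \o th) [set: T].
  apply: (compact_cover_compact cT) => [u _|a _]; first exact: open_interior.
  by exists a => //; exact: th_nbhs.
exists (enum_fset D) => a; have [r rD /interior_subset ra] := cov a I; by exists r.
Qed.

Section FiniteQuotient.
Context {Omega : signature} {A : topologicalType}
  {EA : forall n : nat, Omega n * {ptws 'I_n -> A} -> A}
  {th : A -> A -> Prop} {s : seq A}.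
Hypotheses (hEA : top_algebra EA) (thO : open_congruence EA th)
  (s_cover : forall a, exists2 r, r \in s & th r a).

Lemma class_meets_cover a : exists r, (r \in s) && `[< th r a >].
Proof. by have [r rs ra] := s_cover a; exists r; rewrite rs; apply/asboolP. Qed.

(* [xchoose] depends only on the extension of the predicate, so [class_rep]
   is constant on classes. *)
Definition class_rep a : A := xchoose (class_meets_cover a).

Lemma class_rep_mem a : class_rep a \in s.
Proof. by have /andP[] := xchooseP (class_meets_cover a). Qed.

Lemma class_rep_rel a : th (class_rep a) a.
Proof. by have /andP[_ /asboolP] := xchooseP (class_meets_cover a). Qed.

Lemma class_rep_eq a b : th a b -> class_rep a = class_rep b.
Proof.
have [[_ thS thT _] _] := thO; move=> ab; apply: eq_xchoose => r.
congr (_ && _); apply/asboolP/asboolP => [ra|rb].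
  exact: thT _ _ _ ra ab.
exact: thT _ _ _ rb (thS _ _ ab).
Qed.

Definition quotient_map a : discrete_topology (seq_sub s) := SeqSub (class_rep_mem a).

Lemma quotient_mapP a b : quotient_map a = quotient_map b <-> th a b.
Proof.
have [[_ thS thT _] _] := thO; split=> [ab|/class_rep_eq ab]; last exact: val_inj.
apply: thT (thS _ _ (class_rep_rel a)) _.
have -> : class_rep a = class_rep b := congr1 val ab.
exact: class_rep_rel.
Qed.

Lemma quotient_map_continuous : continuous quotient_map.
Proof.
apply/continuous_discreteP => u; apply: filterS (thO.2 u) => v uv.
by apply/esym/quotient_mapP.
Qed.

Definition quotient_op n (p : Omega n * {ptws 'I_n -> discrete_topology (seq_sub s)})
  : discrete_topology (seq_sub s) :=
  quotient_map (EA n (p.1, (fun i => val (p.2 i)) : {ptws 'I_n -> A})).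

Lemma quotient_map_is_hom : is_hom EA quotient_op quotient_map.
Proof.
have [[_ thS _ thc] _] := thO; move=> n w a; apply/quotient_mapP.
by apply: thc => i; apply: thS; exact: class_rep_rel.
Qed.

Lemma quotient_top_algebra : top_algebra quotient_op.
Proof.
move=> n; pose lift (f : {ptws 'I_n -> discrete_topology (seq_sub s)}) :
  {ptws 'I_n -> A} := fun i => val (f i).
have lift_continuous : continuous lift.
  exact/nbhs_set1_continuous/ptws_discrete_nbhs_set1.
have lift2_continuous := @continuous_map_snd (Omega n) _ _ _ lift_continuous.
move=> p; apply: (@continuous_comp _ _ _ (fun p => EA n (p.1, lift p.2))).
  exact: (@continuous_comp _ _ _ _ (EA n) p (lift2_continuous p) (hEA n _)).
exact: quotient_map_continuous.
Qed.

End FiniteQuotient.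

Lemma open_congruence_finite_quotient {Omega : signature} {A : topologicalType}
    {EA : forall n : nat, Omega n * {ptws 'I_n -> A} -> A} {th : A -> A -> Prop} :
  top_algebra EA -> compact [set: A] -> open_congruence EA th ->
  exists (B : finType)
    (EB : forall n : nat, Omega n * {ptws 'I_n -> discrete_topology B} ->
                          discrete_topology B),
    top_algebra EB /\
    exists h : A -> discrete_topology B,
      [/\ continuous h, is_hom EA EB h & forall a b, h a = h b <-> th a b].
Proof.
move=> hEA cA thO; have [s s_cover] := finite_classes cA thO.2.
exists (seq_sub s), (quotient_op (EA := EA) s_cover); split.
  exact: quotient_top_algebra.
exists (quotient_map s_cover); split.
- exact: quotient_map_continuous thO s_cover.
- exact: quotient_map_is_hom thO s_cover.
- exact: quotient_mapP thO s_cover.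
Qed.

Section OpenCongruences.
Context {Omega : signature} {A : topologicalType}
  {EA : forall n : nat, Omega n * {ptws 'I_n -> A} -> A}.

Lemma hom_kernel_open_congruence (B : choiceType)
    (EB : forall n : nat, Omega n * {ptws 'I_n -> discrete_topology B} ->
                          discrete_topology B)
    (h : A -> discrete_topology B) :
  continuous h -> is_hom EA EB h -> open_congruence EA (fun u v => h u = h v).
Proof.
move=> /continuous_discreteP hc hh; split.
  split=> [//|u v ->//|u v w -> ->//|n w a b ab].
  by rewrite !hh; congr (EB n (w, _)); apply: funext.
by move=> u; apply: filterS (hc u).
Qed.

Lemma open_congruence_bigcap (I : choiceType) (D : {fset I})
    (k : I -> A -> A -> Prop) :
  (forall i, i \in D -> open_congruence EA (k i)) ->
  open_congruence EA (fun u v => forall i, i \in D -> k i u v).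
Proof.
move=> kO; split; last first.
  by move=> u; apply: filter_bigI => i /kO [_]; apply.
split=> [u i /kO [[]]//|u v uv i iD|u v w uv vw i iD|n w a b ab i iD].
- by have [[_ kS _ _] _] := kO i iD; exact: kS _ _ (uv i iD).
- by have [[_ _ kT _] _] := kO i iD; exact: kT _ _ _ (uv i iD) (vw i iD).
- by have [[_ _ _ kc] _] := kO i iD; apply: kc => j; exact: ab.
Qed.

Lemma profinite_open_congruence_separation : profinite EA ->
  forall a b, a <> b -> exists th, open_congruence EA th /\ ~ th a b.
Proof.
move=> [_ sep] a b /sep [B [EB [_ [h [hc hh hab]]]]].
by exists (fun u v => h u = h v); split=> //; exact: hom_kernel_open_congruence hc hh.
Qed.

Lemma saturating_open_congruence (L : set A) :
  compact [set: A] -> clopen L ->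
  (forall a b, a <> b -> exists th, open_congruence EA th /\ ~ th a b) ->
  exists th, open_congruence EA th /\ saturates th L.
Proof.
move=> cA [oL cL] sep.
have /choice [k kO] : forall p : A * A, exists th,
    L p.1 /\ ~ L p.2 -> open_congruence EA th /\ ~ th p.1 p.2.
  move=> [a b]; have [[La nLb]|nab] := pselect (L a /\ ~ L b); last by exists (fun _ _ => True).
  by have [|th thO] := sep a b; [move=> eab; apply: nLb; rewrite -eab|exists th].
pose box p := [set q : A * A | k p p.1 q.1 /\ k p p.2 q.2].
have [D DK cov] : finite_subset_cover (L `*` ~` L) box (L `*` ~` L).
  apply: compact_cover_compact => [|p Kp|p Kp].
  - apply: compact_setX; apply: subclosed_compact cA _ => //.
    exact: open_closedC.
  - have [[[_ _ kT _] k_nbhs] _] := kO p Kp; rewrite openE => q [pq1 pq2].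
    apply: (@filter_pair_set _ _ _ _ _ _ (k p q.1) (k p q.2)) => // u v qu qv.
    by split; [exact: kT _ _ _ pq1 qu|exact: kT _ _ _ pq2 qv].
  - have [[[kr _ _ _] _] _] := kO p Kp.
    by exists p => //; split; exact: kr.
exists (fun u v => forall p, p \in D -> k p u v); split.
  by apply: open_congruence_bigcap => p /DK; rewrite in_setE => /kO [].
move=> u v uv Lu; apply: contrapT => nLv.
have [p pD [pu pv]] := cov (u, v) (conj Lu nLv).
have /kO [[[_ kS kT _] _] nkp] : (L `*` ~` L) p by have := DK p pD; rewrite in_setE.
by apply: nkp; exact: kT _ _ _ (kT _ _ _ pu (uv p pD)) (kS _ _ pv).
Qed.

End OpenCongruences.

Lemma clopen_separation {T : topologicalType} :
  accessible_space T -> zero_dim T ->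
  forall x y : T, x <> y -> exists V, [/\ clopen V, V x & ~ V y].
Proof.
move=> aT zT x y /eqP /aT [U [oU xU yU]].
have [V [clV Vx VU]] := zT U x oU (set_mem xU).
by exists V; split=> // /VU; move: yU; rewrite in_setE.
Qed.

Theorem theorem2p7 (Omega : signature) (A : topologicalType)
  (EA : forall n : nat, Omega n * {ptws 'I_n -> A} -> A) :
  top_algebra EA -> stone_space A ->
  (profinite EA <->
   forall L : set A, clopen L ->
     clopen [set p : A * A | syntactic_congruence EA L p.1 p.2]).
Proof.
move=> hEA [cA hA zA]; split=> [pA L clL|sgL].
  have [th [thO thL]] := saturating_open_congruence _ cA clL
    (profinite_open_congruence_separation pA).
  have [_ sgS sgT _] := syntactic_congruence_is_congruence (EA := EA) (L := L).
  exact: clopen_of_coarser thO.2 (syntactic_congruence_max thO.1 thL) sgS sgT.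
split=> // x y /(clopen_separation (hausdorff_accessible hA) zA) [V [clV Vx nVy]].
have sgC := syntactic_congruence_is_congruence (EA := EA) (L := V).
have sgO : open_congruence EA (syntactic_congruence EA V).
  split=> // u; have [sg_refl _ _ _] := sgC.
  exact: nbhs_class_of_open (sgL V clV).1 u (sg_refl u).
have [B [EB [EBt [h [hc hh hker]]]]] := open_congruence_finite_quotient hEA cA sgO.
exists B, EB; split=> //; exists h; split=> // /hker sg_xy.
exact/nVy/(syntactic_congruence_mem _ _ sg_xy).1.
Qed.
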